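(* Let $d=1$, $X\in\mathbb{R}$ with law $\mathbb{P}_X$, and let the missingness indicator $M\in\{0,1\}$ ($M=0$: observed) satisfy $\mathbb{P}[M=0\mid X]=\mathbb{1}(X\in\mathcal{I})$ for a measurable set $\mathcal{I}\subset\mathbb{R}$ (truncation mechanism); let $\varepsilon=\mathbb{P}[M=1]=\mathbb{P}[X\notin\mathcal{I}]<1$. Assume $\mathbb{P}_X=P_{\theta^*}$ for some $\theta^*\in\Theta$, and let $\theta_\infty^{\mathrm{MMD}}\in\arg\min_{\theta\in\Theta}\mathbb{E}_{M\sim\mathbb{P}_M}\big[\mathbb{D}^2(P_\theta^{(M)},\mathbb{P}_{X\mid M}^{(M)})\big]=\arg\min_{\theta\in\Theta}\mathbb{D}^2(P_\theta,\mathbb{P}_{X\mid M=0})$. Then $$ \mathbb{D}\big(P_{\theta_\infty^{\mathrm{MMD}}},P_{\theta^*}\big)\le 4\varepsilon. $$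
   Context: In expectations over $M$ the empty pattern $M=1$ is excluded, which gives the second expression for $\theta_\infty^{\mathrm{MMD}}$; $\mathbb{P}_{X\mid M=0}$ is the conditional law of $X$ given $M=0$. $\{P_\theta:\theta\in\Theta\}$ is a model on $\mathbb{R}$. $k$ is a positive definite kernel on $\mathbb{R}$ bounded by $1$ and characteristic, with RKHS $\mathcal{H}$, mean embedding $\Phi(Q)=\mathbb{E}_{Y\sim Q}[k(Y,\cdot)]$, MMD $\mathbb{D}(Q_1,Q_2)=\|\Phi(Q_1)-\Phi(Q_2)\|_{\mathcal{H}}$. *)

From HB Require Import structures.
From mathcomp Require Import all_boot all_order all_algebra.
From mathcomp Require Import all_classical all_reals all_analysis.
Set Implicit Arguments. Unset Strict Implicit. Unset Printing Implicit Defensive.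
Import Order.TTheory GRing.Theory Num.Theory.
Import numFieldNormedType.Exports.
Local Open Scope classical_set_scope.
Local Open Scope ring_scope.

Definition pos_def_kernel (R : realType) (k : R -> R -> R) : Prop :=
  (forall x y, k x y = k y x) /\
  (forall (n : nat) (x : 'I_n -> R) (c : 'I_n -> R),
      0 <= \sum_(i < n) \sum_(j < n) c i * c j * k (x i) (x j)).

Definition meas_kernel (R : realType) (k : R -> R -> R) : Prop :=
  measurable_fun [set: R * R] (fun z : R * R => k z.1 z.2).

(* <Phi(P), Phi(Q)>_H = E_{Y~P, Y'~Q} k(Y, Y') (reproducing property). *)
Definition kdot (R : realType) (k : R -> R -> R)
    (P Q : probability R R) : R :=
  fine (\int[P]_x (\int[Q]_y (k x y)%:E))%E.

(* MMD: D(P,Q) = || Phi(P) - Phi(Q) ||_H, written out via the inner products. *)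
Definition MMD (R : realType) (k : R -> R -> R) (P Q : probability R R) : R :=
  Num.sqrt (kdot k P P - 2 * kdot k P Q + kdot k Q Q).

Definition characteristic (R : realType) (k : R -> R -> R) : Prop :=
  forall P Q : probability R R, MMD k P Q = 0 ->
    forall A : set R, measurable A -> P A = Q A.

(* The argmin property and the triangle inequality for D give
   D(P_inf, P_star) <= D(P_inf, P_X|M=0) + D(P_X|M=0, P_star)
                    <= 2 D(P_star, P_X|M=0).
   Under truncation P_star = (1 - eps) P_X|M=0 + eps Q, where Q is the law of X
   given X outside I, so Phi(P_star) - Phi(P_X|M=0) = eps (Phi(Q) - Phi(P_X|M=0)),
   whose norm is at most 2 eps because |k| <= 1.
   As D is given by kernel integrals rather than as a norm, its triangle
   inequality comes from the nonnegativity of the Gram form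
   sum_ij c_i c_j <Phi(P_i), Phi(P_j)>: averaging the positive definite form
   sum_ij c_i c_j k(x_i, x_j) over independent x_i ~ P_i yields the Gram form up
   to a diagonal correction, and repeating every P_i N times multiplies the Gram
   form by N^2 but the correction only by N. *)

From HB Require Import structures.
From mathcomp Require Import all_boot all_order all_algebra.
From mathcomp Require Import all_classical all_reals all_analysis.
From mathcomp Require Import measurable_realfun ring lra.
Set Implicit Arguments. Unset Strict Implicit. Unset Printing Implicit Defensive.
Import Order.TTheory GRing.Theory Num.Theory.
Import numFieldNormedType.Exports.
Local Open Scope classical_set_scope.
Local Open Scope ring_scope.

Section integral_mscale.
Local Open Scope ereal_scope.
Context d (T : measurableType d) (R : realType).

Lemma integral_mscale (m : {measure set T -> \bar R}) (c : {nonneg R})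
    (D : set T) (f : T -> \bar R) :
  measurable D -> m.-integrable D f ->
  \int[mscale c m]_(x in D) f x = c%:num%:E * \int[m]_(x in D) f x.
Proof.
move=> mD intf; have mf := measurable_int m intf.
rewrite [LHS]integralE !ge0_integral_mscale //;
  try exact: measurable_funeneg; try exact: measurable_funepos.
by rewrite -muleBr -?integralE //; exact: integrable_add_def.
Qed.

End integral_mscale.

Section bounded_functions.
Context d (T : measurableType d) (R : realType).
Implicit Types (P : probability T R) (f g : T -> R).

Definition bounded_meas f :=
  measurable_fun setT f /\ exists M, forall x, `|f x| <= M.

Lemma bounded_meas_integrable P f :
  bounded_meas f -> P.-integrable setT (EFin \o f).
Proof.
move=> [mf [M hM]]; apply: measurable_bounded_integrable => //.
  exact: (le_lt_trans (probability_le1 _ measurableT) (ltry 1)).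
exists M; split; first exact: num_real.
by move=> N MN x _; exact: le_trans (hM x) (ltW MN).
Qed.

Lemma bounded_meas_cst c : bounded_meas (fun=> c).
Proof. by split; [exact: measurable_cst | exists `|c|]. Qed.

Lemma bounded_measD f g :
  bounded_meas f -> bounded_meas g -> bounded_meas (fun x => f x + g x).
Proof.
move=> [mf [M hM]] [mg [N hN]]; split; first exact: measurable_funD.
by exists (M + N) => x; apply: le_trans (ler_normD _ _) _; exact: lerD.
Qed.

Lemma bounded_measM f g :
  bounded_meas f -> bounded_meas g -> bounded_meas (fun x => f x * g x).
Proof.
move=> [mf [M hM]] [mg [N hN]]; split; first exact: measurable_funM.
by exists (M * N) => x; rewrite normrM; apply: ler_pM.
Qed.

Lemma bounded_measZ c f : bounded_meas f -> bounded_meas (fun x => c * f x).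
Proof. exact/bounded_measM/bounded_meas_cst. Qed.

Lemma bounded_meas_sum (I : Type) (s : seq I) (F : I -> T -> R) :
  (forall i, bounded_meas (F i)) -> bounded_meas (fun x => \sum_(i <- s) F i x).
Proof.
move=> hF; elim: s => [|i s IH].
  by under eq_fun do rewrite big_nil; exact: bounded_meas_cst.
by under eq_fun do rewrite big_cons; exact: bounded_measD.
Qed.

Lemma bounded_meas_normr f : bounded_meas f -> bounded_meas (fun x => `|f x|).
Proof.
move=> [mf [M hM]]; split; first exact: measurableT_comp.
by exists M => x; rewrite normr_id.
Qed.

Lemma bounded_meas_indic (A : set T) : measurable A -> bounded_meas (\1_A : T -> R).
Proof.
move=> mA; split; first exact: measurable_indic.
by exists 1 => x; rewrite indicE; case: (x \in A); rewrite ?normr1 ?normr0.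
Qed.

Lemma EFin_Rintegral P f :
  bounded_meas f -> (\int[P]_x f x)%:E = (\int[P]_x (f x)%:E)%E.
Proof.
move=> hf; rewrite fineK //.
by apply: integrable_fin_num => //; exact: bounded_meas_integrable.
Qed.

Lemma Rintegral_cst_probability P c : \int[P]_x c = c.
Proof.
rewrite Rintegral_cst // -[RHS]mulr1; congr (_ * _).
exact: (congr1 fine (probability_setT P)).
Qed.

Lemma RintegralD_bounded P f g : bounded_meas f -> bounded_meas g ->
  \int[P]_x (f x + g x) = \int[P]_x f x + \int[P]_x g x.
Proof. by move=> hf hg; rewrite RintegralD //; exact: bounded_meas_integrable. Qed.

Lemma RintegralZl_bounded P c f : bounded_meas f ->
  \int[P]_x (c * f x) = c * \int[P]_x f x.
Proof. by move=> hf; rewrite RintegralZl //; exact: bounded_meas_integrable. Qed.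

Lemma Rintegral_sum_bounded P (I : Type) (s : seq I) (F : I -> T -> R) :
  (forall i, bounded_meas (F i)) ->
  \int[P]_x (\sum_(i <- s) F i x) = \sum_(i <- s) \int[P]_x F i x.
Proof.
move=> hF; elim: s => [|i s IH].
  under eq_Rintegral do rewrite big_nil.
  by rewrite big_nil Rintegral_cst_probability.
under eq_Rintegral do rewrite big_cons.
by rewrite RintegralD_bounded ?IH ?big_cons //; exact: bounded_meas_sum.
Qed.

Lemma normr_Rintegral_le P f M : bounded_meas f ->
  (forall x, `|f x| <= M) -> `|\int[P]_x f x| <= M.
Proof.
move=> hf hM.
apply: le_trans (le_normr_Rintegral measurableT (bounded_meas_integrable P hf)) _.
rewrite -[leRHS](Rintegral_cst_probability P); apply: le_Rintegral => //.
- exact/bounded_meas_integrable/bounded_meas_normr.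
- exact/bounded_meas_integrable/bounded_meas_cst.
Qed.

End bounded_functions.

Section bounded_functions2.
Context d1 d2 (T1 : measurableType d1) (T2 : measurableType d2) (R : realType).
Implicit Types (f : T1 -> T2 -> R).

Definition bounded_meas2 f :=
  measurable_fun setT (fun z : T1 * T2 => f z.1 z.2) /\
  exists M, forall x y, `|f x y| <= M.

Lemma bounded_meas2_integrable (P : probability T1 R) (Q : probability T2 R) f :
  bounded_meas2 f ->
  (P \x Q)%E.-integrable setT (EFin \o (fun z : T1 * T2 => f z.1 z.2)).
Proof.
move=> [mf [M hM]]; apply: measurable_bounded_integrable => //.
  exact: (le_lt_trans (probability_le1 _ measurableT) (ltry 1)).
exists M; split; first exact: num_real.
by move=> N MN z _; exact: le_trans (hM z.1 z.2) (ltW MN).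
Qed.

Lemma bounded_meas2_l f x : bounded_meas2 f -> bounded_meas (f x).
Proof.
by move=> [mf [M hM]]; split; [exact: measurable_fun_pair2 mf | exists M].
Qed.

Lemma bounded_meas2_r f y : bounded_meas2 f -> bounded_meas (fun x => f x y).
Proof.
by move=> [mf [M hM]]; split; [exact: measurable_fun_pair1 mf | exists M].
Qed.

Lemma bounded_meas_Rintegral (Q : probability T2 R) f :
  bounded_meas2 f -> bounded_meas (fun x => \int[Q]_y f x y).
Proof.
move=> hf; have [mf [M hM]] := hf; split; last first.
  by exists M => x; exact/normr_Rintegral_le/hM/bounded_meas2_l.
(* Tonelli yields measurability only for nonnegative integrands. *)
pose g z := f z.1 z.2 + M.
have hg : bounded_meas2 (fun x y => g (x, y)).
  split; first exact: measurable_funD.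
  exists (M + `|M|) => x y; rewrite /g /=.
  by apply: le_trans (ler_normD _ _) _; exact: lerD.
have g0 z : (0 <= (g z)%:E)%E.
  by move: (hM z.1 z.2); rewrite ler_norml lee_fin /g => /andP[? _]; lra.
have mG : measurable_fun setT (fun x => \int[Q]_y g (x, y)).
  apply/measurable_EFinP.
  have -> : (EFin \o fun x => \int[Q]_y g (x, y)) = fubini_F Q (EFin \o g).
    by apply/funext => x /=; rewrite EFin_Rintegral //; exact: bounded_meas2_l hg.
  by apply: measurable_fun_fubini_tonelli_F => //; apply/measurable_EFinP; case: hg.
have -> : (fun x => \int[Q]_y f x y) = (fun x => \int[Q]_y g (x, y) - M).
  apply/funext => x.
  rewrite RintegralD_bounded ?Rintegral_cst_probability ?addrK //.
  - exact: bounded_meas2_l.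
  - exact: bounded_meas_cst.
by apply: measurable_funB => //; exact: measurable_cst.
Qed.

End bounded_functions2.

Section Rintegral_fubini.
Context d1 d2 (T1 : measurableType d1) (T2 : measurableType d2) (R : realType).

Lemma Rintegral_fubini (P : probability T1 R) (Q : probability T2 R)
    (f : T1 -> T2 -> R) :
  bounded_meas2 f ->
  \int[P]_x \int[Q]_y f x y = \int[Q]_y \int[P]_x f x y.
Proof.
move=> hf; have [mf [M hM]] := hf.
have hf' : bounded_meas2 (fun y x => f x y).
  split; last by exists M.
  exact: measurableT_comp mf (measurable_fun_pair measurable_snd measurable_fst).
apply: EFin_inj; rewrite !EFin_Rintegral; [|exact: bounded_meas_Rintegral ..].
transitivity (\int[P]_x \int[Q]_y (f x y)%:E)%E.
  by apply: eq_integral => x _; rewrite EFin_Rintegral //; exact: bounded_meas2_l.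
rewrite (Fubini (bounded_meas2_integrable P Q hf)).
by apply: eq_integral => y _; rewrite EFin_Rintegral //; exact: bounded_meas2_r.
Qed.

End Rintegral_fubini.

Section quadratic_forms.
Context {R : comPzRingType} {T : Type}.
Implicit Types (W : T -> T -> R) (s : seq (R * T)).

Definition qform W s := \sum_(u <- s) \sum_(v <- s) u.1 * v.1 * W u.2 v.2.

Lemma qform_cons W a x s : (forall y z, W y z = W z y) ->
  qform W ((a, x) :: s) =
  a ^+ 2 * W x x + 2 * a * \sum_(u <- s) u.1 * W u.2 x + qform W s.
Proof.
move=> Wsym; rewrite /qform !big_cons /=.
under [X in _ + X = _]eq_bigr => u _ do rewrite big_cons /=.
rewrite big_split /=.
have -> : \sum_(v <- s) a * v.1 * W x v.2 = a * \sum_(u <- s) u.1 * W u.2 x.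
  by rewrite mulr_sumr; apply: eq_bigr => u _; rewrite Wsym mulrA.
have -> : \sum_(u <- s) u.1 * a * W u.2 x = a * \sum_(u <- s) u.1 * W u.2 x.
  by rewrite mulr_sumr; apply: eq_bigr => u _; rewrite (mulrC u.1) mulrA.
ring.
Qed.

Lemma sum_flatten_nseq (V : Type) (s : seq V) (f : V -> R) N :
  \sum_(v <- flatten (nseq N s)) f v = N%:R * \sum_(v <- s) f v.
Proof. by rewrite big_flatten big_nseq iter_addr_0 mulr_natl. Qed.

Lemma qform_flatten_nseq W s N :
  qform W (flatten (nseq N s)) = N%:R ^+ 2 * qform W s.
Proof.
rewrite /qform sum_flatten_nseq.
under eq_bigr do rewrite sum_flatten_nseq.
by rewrite -mulr_sumr mulrA -expr2.
Qed.

End quadratic_forms.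

Section real_inequalities.
Context {R : realType}.

Lemma natr_quadratic_ge0_lead (x y : R) :
  (forall N : nat, 0 <= N%:R ^+ 2 * x + N%:R * y) -> 0 <= x.
Proof.
move=> hN; rewrite leNgt; apply/negP => x_lt0.
pose N := (Num.truncn (`|y| / - x)).+1.
have N_gt0 : 0 < N%:R :> R by rewrite ltr0n.
have : `|y| < N%:R * - x by rewrite -ltr_pdivrMr ?oppr_gt0 // truncnS_gt.
have := hN N; rewrite expr2 -mulrA -mulrDr pmulr_rge0 //.
have := ler_norm y; rewrite mulrN; lra.
Qed.

Lemma quadratic_ge0_discriminant (a b c : R) : 0 <= a ->
  (forall t, 0 <= t ^+ 2 * a + 2 * t * b + c) -> b ^+ 2 <= a * c.
Proof.
move=> a_ge0 hq.
have c_ge0 : 0 <= c by have := hq 0; rewrite expr2 !(mul0r, mulr0, add0r).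
have [a0|a_neq0] := eqVneq a 0; last first.
  have a_pos : 0 < a by rewrite lt_def a_neq0.
  have := hq (- b / a).
  have -> : (- b / a) ^+ 2 * a + 2 * (- b / a) * b + c = c - b ^+ 2 / a by field.
  by rewrite subr_ge0 ler_pdivrMr // mulrC.
rewrite a0 mul0r; have [->|b_neq0] := eqVneq b 0; first by rewrite expr2 mul0r.
have := hq (- (c + 1) / (2 * b)); rewrite a0.
have -> : (- (c + 1) / (2 * b)) ^+ 2 * 0 + 2 * (- (c + 1) / (2 * b)) * b + c = - 1.
  by field.
by rewrite oppr_ge0 ler10.
Qed.

Lemma sqrt_quadratic_triangle (a b c : R) : 0 <= a ->
  (forall t, 0 <= t ^+ 2 * a + 2 * t * b + c) ->
  Num.sqrt (a + 2 * b + c) <= Num.sqrt a + Num.sqrt c.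
Proof.
move=> a_ge0 hq.
have c_ge0 : 0 <= c by have := hq 0; rewrite expr2 !(mul0r, mulr0, add0r).
have b_le : b <= Num.sqrt a * Num.sqrt c.
  rewrite -sqrtrM //; apply: le_trans (ler_norm b) _.
  by rewrite -sqrtr_sqr ler_wsqrtr // quadratic_ge0_discriminant.
rewrite -[leRHS]ger0_norm ?addr_ge0 ?sqrtr_ge0 // -sqrtr_sqr ler_wsqrtr //.
by rewrite sqrrD !sqr_sqrtr //; lra.
Qed.

End real_inequalities.

Section truncation.
Context d (T : measurableType d) (R : realType).
Variables (C B : probability T R) (I : set T).
Hypothesis mI : measurable I.
Hypothesis B_cond : forall A, measurable A -> (B A * C I = C (A `&` I))%E.
Hypothesis CnI_lt1 : fine (C (~` I)) < 1.

(* C = (1 - eps) B + C(. `&` ~` I) with eps = C (~` I); [trunc_tail g] is the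
   integral of g against the second part. *)
Definition trunc_tail (g : T -> R) := \int[C]_x (\1_(~` I) x * g x).

Let p := fine (C I).
Let eps := fine (C (~` I)).

Let CI : C I = p%:E.
Proof. by rewrite /p fineK //; exact: fin_num_measure. Qed.

Let p_eps : p = 1 - eps.
Proof. by rewrite /eps probability_setC // CI /= opprB addrC subrK. Qed.

Let p_gt0 : 0 < p.
Proof. by rewrite p_eps subr_gt0. Qed.

Let BnI : B (~` I) = 0%E.
Proof.
have := B_cond (measurableC mI); rewrite setICl measure0 CI => /eqP.
by rewrite mule_eq0 eqe (gt_eqF p_gt0) orbF => /eqP.
Qed.

Let Rintegral_in_cond g : bounded_meas g ->
  \int[C]_(x in I) g x = p * \int[B]_x g x.
Proof.
move=> hg; have intg := bounded_meas_integrable B hg.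
pose pnn : {nonneg R} := NngNum (ltW p_gt0).
rewrite /Rintegral (eq_measure_integral (mscale pnn B)); last first.
  move=> A mA AI; change (C A = (pnn%:num%:E * B A)%E).
  by rewrite -[in LHS](setIidl AI) -B_cond // CI muleC.
rewrite (integral_mscale pnn (m := B)) //; last exact: integrableS intg.
rewrite fineM //; last exact: integrable_fin_num (integrableS _ _ _ intg).
congr (_ * fine _).
by rewrite [RHS](negligible_integral (measurableC mI)) // setTD setCK.
Qed.

Lemma Rintegral_truncation g : bounded_meas g ->
  \int[C]_x g x = (1 - fine (C (~` I))) * \int[B]_x g x + trunc_tail g.
Proof.
move=> hg; rewrite -/eps -p_eps.
have -> : \int[C]_x g x = \int[C]_x (\1_I x * g x + \1_(~` I) x * g x).
  apply: eq_Rintegral => x _; rewrite -mulrDl !indicE in_setC.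
  by case: (x \in I); rewrite /= ?add0r ?addr0 mul1r.
have hI (A : set T) : measurable A -> bounded_meas (fun x => \1_A x * g x).
  by move=> mA; apply: bounded_measM => //; exact: bounded_meas_indic.
rewrite RintegralD_bounded; [|exact: hI|exact/hI/measurableC].
congr (_ + _); rewrite -Rintegral_in_cond // [RHS]Rintegral_mkcond.
apply: eq_Rintegral => x _; rewrite /patch indicE.
by case: (x \in I); rewrite ?mul1r ?mul0r.
Qed.

Lemma normr_trunc_tail_le g M : bounded_meas g -> (forall x, `|g x| <= M) ->
  `|trunc_tail g| <= M * eps.
Proof.
move=> hg hM.
have hnI : bounded_meas (\1_(~` I) : T -> R).
  exact/bounded_meas_indic/measurableC.
have htail := bounded_measM hnI hg.
have intC := bounded_meas_integrable C htail.
apply: le_trans (le_normr_Rintegral measurableT intC) _.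
have -> : M * eps = \int[C]_x (M * \1_(~` I) x).
  rewrite RintegralZl_bounded // /Rintegral integral_indic ?setIT //.
  exact: measurableC.
apply: le_Rintegral => //.
- exact/bounded_meas_integrable/bounded_meas_normr.
- exact/bounded_meas_integrable/bounded_measZ.
move=> x _; rewrite normrM indicE.
by case: (x \in ~` I); rewrite ?normr1 ?normr0 ?mul1r ?mul0r ?mulr1 ?mulr0.
Qed.

End truncation.

Section mean_embedding.
Context {R : realType} (k : R -> R -> R).
Hypothesis k_sym : forall x y, k x y = k y x.
Hypothesis k_pd : forall (n : nat) (x : 'I_n -> R) (c : 'I_n -> R),
  0 <= \sum_(i < n) \sum_(j < n) c i * c j * k (x i) (x j).
Hypothesis k_meas : meas_kernel k.
Hypothesis k_bnd : forall x y, `|k x y| <= 1.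
Notation prob := (probability R R).
Implicit Types (P Q S : prob).

Definition kmean P x := \int[P]_y k x y.
Definition kinner P Q := \int[P]_x kmean Q x.
Definition kdiag P := \int[P]_x k x x.

Lemma bounded_meas2_kernel : bounded_meas2 k.
Proof. by split; [exact: k_meas | exists 1]. Qed.

Lemma bounded_meas_kernel x : bounded_meas (k x).
Proof. exact: bounded_meas2_l bounded_meas2_kernel. Qed.

Lemma bounded_meas_kmean P : bounded_meas (kmean P).
Proof. exact: bounded_meas_Rintegral bounded_meas2_kernel. Qed.

Lemma bounded_meas_kdiag : bounded_meas (fun x => k x x).
Proof.
split; last by exists 1.
exact: measurableT_comp k_meas
  (measurable_fun_pair (@measurable_id _ R setT) (@measurable_id _ R setT)).
Qed.

Lemma normr_kmean_le P x : `|kmean P x| <= 1.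
Proof. exact: normr_Rintegral_le (bounded_meas_kernel x) (k_bnd x). Qed.

Lemma normr_kinner_le P Q : `|kinner P Q| <= 1.
Proof. exact: normr_Rintegral_le (bounded_meas_kmean Q) (normr_kmean_le Q). Qed.

Lemma kinnerC P Q : kinner P Q = kinner Q P.
Proof.
rewrite /kinner /kmean (Rintegral_fubini _ _ bounded_meas2_kernel).
by apply: eq_Rintegral => y _; apply: eq_Rintegral => x _; rewrite k_sym.
Qed.

Lemma kdotE P Q : kdot k P Q = kinner P Q.
Proof.
rewrite /kdot /kinner /Rintegral; congr fine; apply: eq_integral => x _.
by rewrite EFin_Rintegral //; exact: bounded_meas_kernel.
Qed.

Implicit Types (ys : seq (R * R)) (ms : seq (R * prob)).

Lemma qform_kernel_ge0 ys : 0 <= qform k ys.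
Proof.
have := k_pd (fun i : 'I_(size ys) => (nth (0, 0) ys i).2)
             (fun i : 'I_(size ys) => (nth (0, 0) ys i).1).
rewrite /qform (big_nth (0, 0)) big_mkord.
by under [in X in _ -> _ <= X]eq_bigr => i _ do rewrite (big_nth (0, 0)) big_mkord.
Qed.

(* The expectation of [qform k (ys ++ [seq (m.1, x_m) | m <- ms])] for
   independent x_m ~ m.2; off the diagonal, x_m and x_m' are integrated
   separately, which produces the Gram form of [ms]. *)
Definition sampled_form ms ys :=
  qform k ys + 2 * \sum_(u <- ys) \sum_(m <- ms) u.1 * m.1 * kmean m.2 u.2 +
  qform kinner ms + \sum_(m <- ms) m.1 ^+ 2 * (kdiag m.2 - kinner m.2 m.2).

Lemma sampled_form_cons_point a x ms ys :
  sampled_form ms ((a, x) :: ys) =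
  a ^+ 2 * k x x +
  2 * a * (\sum_(u <- ys) u.1 * k u.2 x + \sum_(m <- ms) m.1 * kmean m.2 x) +
  sampled_form ms ys.
Proof.
rewrite /sampled_form qform_cons // big_cons /=.
have -> : \sum_(m <- ms) a * m.1 * kmean m.2 x =
          a * \sum_(m <- ms) m.1 * kmean m.2 x.
  by rewrite mulr_sumr; apply: eq_bigr => m _; rewrite mulrA.
ring.
Qed.

Lemma sampled_form_cons_measure a P ms ys :
  sampled_form ((a, P) :: ms) ys =
  a ^+ 2 * kdiag P +
  2 * a * (\sum_(u <- ys) u.1 * kmean P u.2 + \sum_(m <- ms) m.1 * kinner m.2 P) +
  sampled_form ms ys.
Proof.
rewrite /sampled_form qform_cons; last exact: kinnerC.
rewrite big_cons /=; under eq_bigr => u _ do rewrite big_cons /=.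
rewrite big_split /=.
have -> : \sum_(u <- ys) u.1 * a * kmean P u.2 =
          a * \sum_(u <- ys) u.1 * kmean P u.2.
  by rewrite mulr_sumr; apply: eq_bigr => u _; rewrite (mulrC u.1) mulrA.
ring.
Qed.

Lemma Rintegral_sampled_form a P ms ys :
  \int[P]_x sampled_form ms ((a, x) :: ys) = sampled_form ((a, P) :: ms) ys.
Proof.
have hk := bounded_meas_kernel.
have hmean := bounded_meas_kmean.
have hpts : bounded_meas (fun x => \sum_(u <- ys) u.1 * k u.2 x).
  by apply: bounded_meas_sum => u; exact: bounded_measZ.
have hmes : bounded_meas (fun x => \sum_(m <- ms) m.1 * kmean m.2 x).
  by apply: bounded_meas_sum => m; exact: bounded_measZ.
have hsum :
    \int[P]_x (\sum_(u <- ys) u.1 * k u.2 x + \sum_(m <- ms) m.1 * kmean m.2 x) =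
    \sum_(u <- ys) u.1 * kmean P u.2 + \sum_(m <- ms) m.1 * kinner m.2 P.
  rewrite RintegralD_bounded // !Rintegral_sum_bounded; last 2 first.
  - by move=> m; exact: bounded_measZ.
  - by move=> u; exact: bounded_measZ.
  congr (_ + _); apply: eq_bigr => m _; rewrite RintegralZl_bounded //.
  by rewrite kinnerC.
under eq_Rintegral do rewrite sampled_form_cons_point.
rewrite sampled_form_cons_measure; move: (sampled_form ms ys) => c.
rewrite RintegralD_bounded; last 2 first.
- apply: bounded_measD; apply: bounded_measZ; last exact: bounded_measD.
  exact: bounded_meas_kdiag.
- exact: bounded_meas_cst.
rewrite RintegralD_bounded; last 2 first.
- by apply: bounded_measZ; exact: bounded_meas_kdiag.
- by apply: bounded_measZ; exact: bounded_measD.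
by rewrite !RintegralZl_bounded ?hsum ?Rintegral_cst_probability //;
  [exact: bounded_measD | exact: bounded_meas_kdiag].
Qed.

Lemma sampled_form_ge0 ms ys : 0 <= sampled_form ms ys.
Proof.
elim: ms ys => [|[a P] ms IH] ys.
  rewrite /sampled_form big_nil [qform _ [::]]/qform big_nil.
  by rewrite big1 ?mulr0 ?addr0 ?qform_kernel_ge0 // => u _; rewrite big_nil.
by rewrite -Rintegral_sampled_form; apply: Rintegral_ge0 => x _; exact: IH.
Qed.

Lemma qform_kinner_ge0 ms : 0 <= qform kinner ms.
Proof.
pose D := \sum_(m <- ms) m.1 ^+ 2 * (kdiag m.2 - kinner m.2 m.2).
apply: (@natr_quadratic_ge0_lead _ _ D) => N.
have := sampled_form_ge0 (flatten (nseq N ms)) [::].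
rewrite /sampled_form big_nil qform_flatten_nseq sum_flatten_nseq.
by rewrite [qform _ [::]]/qform !big_nil mulr0 !add0r.
Qed.

Lemma MMDC P Q : MMD k P Q = MMD k Q P.
Proof. by rewrite /MMD !kdotE (kinnerC Q P); congr Num.sqrt; ring. Qed.

Lemma MMD_triangle P Q S : MMD k P S <= MMD k P Q + MMD k Q S.
Proof.
rewrite /MMD !kdotE.
have gram3 a b c : 0 <= a ^+ 2 * kinner P P + b ^+ 2 * kinner Q Q +
    c ^+ 2 * kinner S S + 2 * a * b * kinner P Q +
    2 * a * c * kinner P S + 2 * b * c * kinner Q S.
  have := qform_kinner_ge0 [:: (a, P); (b, Q); (c, S)].
  rewrite /qform !big_cons !big_nil /= (kinnerC Q P) (kinnerC S P) (kinnerC S Q).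
  by congr (_ <= _); ring.
have -> : kinner P P - 2 * kinner P S + kinner S S =
    (kinner P P - 2 * kinner P Q + kinner Q Q) +
    2 * (kinner P Q - kinner P S - kinner Q Q + kinner Q S) +
    (kinner Q Q - 2 * kinner Q S + kinner S S) by ring.
apply: sqrt_quadratic_triangle => [|t].
  by have := gram3 1 (-1) 0; congr (_ <= _); ring.
by have := gram3 t (1 - t) (-1); congr (_ <= _); ring.
Qed.

Section truncated_law.
Variables (C B : prob) (I : set R).
Hypothesis mI : measurable I.
Hypothesis B_cond : forall A, measurable A -> (B A * C I = C (A `&` I))%E.
Hypothesis CnI_lt1 : fine (C (~` I)) < 1.

Let eps := fine (C (~` I)).
Let tail := trunc_tail C I.
Let tail_k x := tail (k x).

Let bounded_meas2_tail_kernel :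
  bounded_meas2 (fun x y => \1_(~` I) y * k x y).
Proof.
split; last first.
  exists 1 => x y; rewrite normrM indicE.
  by case: (y \in ~` I); rewrite ?normr1 ?normr0 ?mul1r ?mul0r.
apply: (measurable_funM (f := fun z : R * R => \1_(~` I) z.2)) => //.
apply: measurableT_comp; last exact: measurable_snd.
exact/measurable_indic/measurableC.
Qed.

Let bounded_meas_tail_k : bounded_meas tail_k.
Proof. exact: bounded_meas_Rintegral bounded_meas2_tail_kernel. Qed.

Let Rintegral_tail_k : \int[B]_x tail_k x = tail (kmean B).
Proof.
rewrite /tail_k /tail /trunc_tail (Rintegral_fubini _ _ bounded_meas2_tail_kernel).
apply: eq_Rintegral => y _.
rewrite RintegralZl_bounded; last exact: bounded_meas2_r bounded_meas2_kernel.
by congr (_ * _); apply: eq_Rintegral => x _; rewrite k_sym.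
Qed.

Let kinner_CB : kinner C B = (1 - eps) * kinner B B + tail (kmean B).
Proof. exact (Rintegral_truncation mI B_cond CnI_lt1 (bounded_meas_kmean B)). Qed.

Let kinner_CC :
  kinner C C = (1 - eps) * kinner C B + (1 - eps) * tail (kmean B) + tail tail_k.
Proof.
rewrite {1}/kinner; have -> : kmean C = fun x => (1 - eps) * kmean B x + tail_k x.
  apply/funext => x.
  exact (Rintegral_truncation mI B_cond CnI_lt1 (bounded_meas_kernel x)).
rewrite RintegralD_bounded //; last exact/bounded_measZ/bounded_meas_kmean.
rewrite RintegralZl_bounded; last exact: bounded_meas_kmean.
rewrite (Rintegral_truncation mI B_cond CnI_lt1 bounded_meas_tail_k).
by rewrite Rintegral_tail_k addrA.
Qed.

Lemma MMD_truncation_sqr :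
  kinner C C - 2 * kinner C B + kinner B B =
  eps ^+ 2 * kinner B B - 2 * eps * tail (kmean B) + tail tail_k.
Proof. by rewrite kinner_CC kinner_CB; ring. Qed.

Lemma MMD_truncation_le : MMD k C B <= 2 * fine (C (~` I)).
Proof.
have eps_ge0 : 0 <= eps by rewrite fine_ge0.
have tail_k_le x : `|tail_k x| <= 1 * eps.
  exact (normr_trunc_tail_le C mI (bounded_meas_kernel x) (k_bnd x)).
have := normr_kinner_le B B.
have := normr_trunc_tail_le C mI (bounded_meas_kmean B) (normr_kmean_le B).
have := normr_trunc_tail_le C mI bounded_meas_tail_k tail_k_le.
rewrite -/tail -/eps !mul1r !ler_norml.
move=> /andP[_ t_le] /andP[A_ge _] /andP[_ bb_le].
have sqr_le : eps ^+ 2 * kinner B B - 2 * eps * tail (kmean B) + tail tail_k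
              <= (2 * eps) ^+ 2.
  have : 0 <= eps ^+ 2 * (1 - kinner B B).
    by apply: mulr_ge0; [exact: sqr_ge0 | lra].
  have : 0 <= eps * (tail (kmean B) + eps) by apply: mulr_ge0 => //; lra.
  nra.
rewrite /MMD !kdotE MMD_truncation_sqr.
by apply: le_trans (ler_wsqrtr sqr_le) _; rewrite sqrtr_sqr ger0_norm // mulr_ge0.
Qed.

End truncated_law.
End mean_embedding.

Theorem corollary1 (R : realType) (k : R -> R -> R)
    (k_pd : pos_def_kernel k) (k_meas : meas_kernel k)
    (k_bnd : forall x y, `|k x y| <= 1) (k_char : characteristic k)
    (Theta : Type) (Pth : Theta -> probability R R) (theta_star : Theta)
    (I : set R) (mI : measurable I)
    (eps_lt1 : fine (Pth theta_star (~` I)) < 1)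
    (PXM0 : probability R R)
    (PXM0_def : forall A : set R, measurable A ->
        (PXM0 A * Pth theta_star I = Pth theta_star (A `&` I))%E)
    (theta_inf : Theta)
    (theta_inf_argmin : forall theta : Theta,
        MMD k (Pth theta_inf) PXM0 ^+ 2 <= MMD k (Pth theta) PXM0 ^+ 2) :
  MMD k (Pth theta_inf) (Pth theta_star) <= 4 * fine (Pth theta_star (~` I)).
Proof.
have [k_sym k_pd'] := k_pd.
have inf_le_star : MMD k (Pth theta_inf) PXM0 <= MMD k (Pth theta_star) PXM0.
  by rewrite -ler_sqr ?nnegrE ?sqrtr_ge0.
have star_le := MMD_truncation_le k_sym k_meas k_bnd mI PXM0_def eps_lt1.
have := MMD_triangle k_sym k_pd' k_meas k_bnd (Pth theta_inf) PXM0 (Pth theta_star).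
rewrite (MMDC k_sym k_meas k_bnd PXM0); lra.
Qed.
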